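(* Let $(Q,\mathcal M)$ be a modulated quiver with $Q$ a tree, $I$ an admissible ideal of $T(Q,\mathcal M)$, $\Psi$ a complexification isomorphism and $J=\Psi(\mathbf e(I\otimes_{\mathbb R}\mathbb C)\mathbf e)$. Let $\beta:u\to v$ and $\alpha:v\to w$ be arrows of $Q$ with $\mathcal M(v)=\mathbb C$. Then the path $\alpha\beta$ has exactly two fibers in $\Gamma$, of the form $p$ and $\tau(p)$, and $p\in J$ if and only if $\tau(p)\in J$.
   Context: Quivers $Q=(Q_0,Q_1,s,t)$ are finite; an arrow $\alpha$ goes from $s(\alpha)$ to $t(\alpha)$. Paths are written from right to left: a path of length $n\ge1$ is $p=\alpha_n\cdots\alpha_1$ with $t(\alpha_k)=s(\alpha_{k+1})$; each vertex $i$ has a trivial path $e_i$. $Q$ is a tree if its underlying graph is a tree. $\mathbb C\Gamma$ is the complex path algebra of $\Gamma$. Let $\mathbb H=\{\begin{bmatrix}a&b\\-\bar b&\bar a\end{bmatrix}:a,b\in\mathbb C\}\subset M_2(\mathbb C)$ be the real quaternions. A modulation $\mathcal M$ of $Q$ assigns to each vertex $i$ a division ring $\mathcal M(i)\in\{\mathbb R,\mathbb C,\mathbb H\}$ and to each arrow $\alpha$ a simple $\mathcal M(t(\alpha))$-$\mathcal M(s(\alpha))$-bimodule $\mathcal M(\alpha)$ on which $\mathbb R$ acts centrally; $(Q,\mathcal M)$ is a modulated quiver. Up to isomorphism there is exactly one such simple bimodule for each pair of these division rings other than $(\mathbb C,\mathbb C)$ (e.g. $\mathbb C^2$ as column vectors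 for the pair $(\mathbb H,\mathbb C)$ and as row vectors for $(\mathbb C,\mathbb H)$), and for $(\mathbb C,\mathbb C)$ there are exactly two: $\mathbb C$ with action $a\cdot z\cdot b=azb$, and $\overline{\mathbb C}$, which is $\mathbb C$ as a set with action $a\cdot z\cdot b=az\bar b$. For a path $p=\alpha_n\cdots\alpha_1$ put $\mathcal M(p)=\mathcal M(\alpha_n)\otimes_{\mathcal M(s(\alpha_n))}\cdots\otimes_{\mathcal M(s(\alpha_2))}\mathcal M(\alpha_1)$, and $\mathcal M(e_i)=\mathcal M(i)$. The tensor algebra is $T(Q,\mathcal M)=\prod_{i\in Q_0}\mathcal M(i)\oplus\bigoplus_{p}\mathcal M(p)$ (sum over paths of length $\ge1$). An ideal $I$ of $T(Q,\mathcal M)$ is admissible if $A^m\subseteq I\subseteq A^2$ for some $m\ge2$, where $A$ is the ideal generated by $\bigoplus_{\alpha\in Q_1}\mathcal M(\alpha)$. The quiver $\Gamma$ of $(Q,\mathcal M)$: each $i\in Q_0$ with $\mathcal M(i)\in\{\mathbb R,\mathbb H\}$ gives one vertex $i$ of $\Gamma$; each $i$ with $\mathcal M(i)=\mathbb C$ gives two vertices $i,\bar i$. Each arrow $\alpha:i\to j$ of $Q$ gives arrows of $\Gamma$ as follows: if $\mathcal M(i)=\mathcal M(j)\in\{\mathbb R,\mathbb H\}$, one arrow $\alpha:i\to j$; if $\mathcal M(i)=\mathbb C$ and $\mathcal M(j)\in\{\mathbb R,\mathbb H\}$, arrows $\alpha:i\to j$, $\bar\alpha:\bar i\to j$; if $\mathcal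 M(i)\in\{\mathbb R,\mathbb H\}$ and $\mathcal M(j)=\mathbb C$, arrows $\alpha:i\to j$, $\bar\alpha:i\to\bar j$; if $\{\mathcal M(i),\mathcal M(j)\}=\{\mathbb R,\mathbb H\}$, two arrows $\alpha,\bar\alpha:i\to j$; if $\mathcal M(i)=\mathcal M(j)=\mathbb C$ and $\mathcal M(\alpha)=\mathbb C$, arrows $\alpha:i\to j$, $\bar\alpha:\bar i\to\bar j$; if $\mathcal M(i)=\mathcal M(j)=\mathbb C$ and $\mathcal M(\alpha)=\overline{\mathbb C}$, arrows $\alpha:\bar i\to j$, $\bar\alpha:i\to\bar j$. The map $\pi:\Gamma\to Q$ sends $i,\bar i\mapsto i$ and $\alpha,\bar\alpha\mapsto\alpha$; $\tau$ is the quiver automorphism of $\Gamma$ exchanging $i\leftrightarrow\bar i$ and $\alpha\leftrightarrow\bar\alpha$ whenever the barred element exists and fixing all other vertices and arrows. A vertex or arrow $x$ of $\Gamma$ is a fiber of $\pi(x)$; a path $\beta_n\cdots\beta_1$ of $\Gamma$ is a fiber of the path $\pi(\beta_n)\cdots\pi(\beta_1)$ of $Q$, and the fibers of a trivial path $e_i$ are the trivial paths $e_{i'}$ with $i'$ a fiber of $i$. Identify $\mathbb R\otimes_{\mathbb R}\mathbb C=\mathbb C$, $\mathbb H\otimes_{\mathbb R}\mathbb C\cong M_2(\mathbb C)$ via $h\otimes c\mapsto ch$, and $\mathbb C\otimes_{\mathbb R}\mathbb C\cong\mathbb C\times\mathbb C$ via $a\otimes b\mapsto(ab,\bar ab)$.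 Let $\mathbf e=(\epsilon_i)_{i\in Q_0}\in\prod_i\mathcal M(i)\otimes_{\mathbb R}\mathbb C\subseteq T(Q,\mathcal M)\otimes_{\mathbb R}\mathbb C$, where $\epsilon_i=1$ if $\mathcal M(i)\in\{\mathbb R,\mathbb C\}$ and $\epsilon_i$ corresponds to the matrix unit $\begin{bmatrix}1&0\\0&0\end{bmatrix}$ if $\mathcal M(i)=\mathbb H$. A complexification isomorphism for $(Q,\mathcal M)$ is a $\mathbb C$-algebra isomorphism $\Psi:\mathbf e(T(Q,\mathcal M)\otimes_{\mathbb R}\mathbb C)\mathbf e\to\mathbb C\Gamma$ such that for every path $p$ of $Q$ (trivial or not), $\Psi(\mathbf e(\mathcal M(p)\otimes_{\mathbb R}\mathbb C)\mathbf e)=\bigoplus_q\mathbb Cq$, the sum over all fibers $q$ of $p$ in $\Gamma$; such isomorphisms exist. *)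

From HB Require Import structures.
From mathcomp Require Import all_boot all_algebra.
From mathcomp Require Import reals complex.

Set Implicit Arguments.
Unset Strict Implicit.
Unset Printing Implicit Defensive.

Import GRing.Theory Num.Theory.
Local Open Scope ring_scope.
Local Open Scope complex_scope.

(* The three division rings R, C, H, all realised (as in the paper) inside  *)
(* M_2(C):  H = { [a b; -b^* a^*] },  C = { [a 0; 0 a^*] },  R = real a.    *)

Inductive dkind := KR | KC | KH.

Definition isC (k : dkind) : bool := if k is KC then true else false.

Definition kmax (k1 k2 : dkind) : dkind :=
  match k1, k2 with
  | KH, _ | _, KH => KH
  | KC, _ | _, KC => KC
  | _, _ => KR
  end.

Section DivRings.
Variable R : realType.

Definition qmat (a b : R[i]) : 'M[R[i]]_2 :=
  \matrix_(i < 2, j < 2)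
    if i == 0 :> nat then (if j == 0 :> nat then a else b)
    else (if j == 0 :> nat then - conjc b else conjc a).

Definition inD (k : dkind) (x : 'M[R[i]]_2) : Prop :=
  match k with
  | KR => exists r : R, x = qmat r%:C 0
  | KC => exists a : R[i], x = qmat a 0
  | KH => exists a b : R[i], x = qmat a b
  end.

(* entrywise complex conjugation: on C = {qmat a 0} it is a |-> conj a *)
Definition conjm (x : 'M[R[i]]_2) : 'M[R[i]]_2 := map_mx conjc x.

End DivRings.

(* Modulated quivers.  A modulation is given up to isomorphism, using the   *)
(* classification of simple bimodules recalled in the context: a division   *)
(* ring kind dk i for each vertex, and for arrows between two C-vertices a  *)
(* flag cj (true = the bimodule \bar C, false = C).  For non C-C arrows cj  *)
(* is irrelevant.                                                           *)

Record mquiver := MQuiver {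
  Q0 : finType;
  Q1 : finType;
  src : Q1 -> Q0;
  tgt : Q1 -> Q0;
  dk : Q0 -> dkind;
  cj : Q1 -> bool
}.

Section Quiver.
Variable M : mquiver.
Local Notation s := (src (m:=M)).
Local Notation t := (tgt (m:=M)).

(* underlying graph is a tree: connected and without cycles, where a cycle *)
(* is a nonempty closed walk using pairwise distinct arrows (each arrow     *)
(* traversed forwards (true) or backwards (false)).                        *)
Definition qadj : rel (Q0 M) := fun i j =>
  [exists a, ((s a == i) && (t a == j)) || ((s a == j) && (t a == i))].

Definition wsrc (x : Q1 M * bool) : Q0 M := if x.2 then s x.1 else t x.1.
Definition wtgt (x : Q1 M * bool) : Q0 M := if x.2 then t x.1 else s x.1.

Definition is_tree : Prop :=
  (forall i j, connect qadj i j) /\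
  (forall w : seq (Q1 M * bool), w != [::] -> uniq (map fst w) ->
      ~~ cycle (fun x y => wtgt x == wsrc y) w).

(* paths of Q: (start vertex, [:: a_1; ...; a_n]) standing for a_n ... a_1 *)
Fixpoint qchain (v : Q0 M) (l : seq (Q1 M)) : bool :=
  if l is a :: l' then (s a == v) && qchain (t a) l' else true.

(* vertices (i, false) = i, (i, true) = \bar i (only when M(i) = C);        *)
(* arrows (a, false) = a, (a, true) = \bar a (only when it exists).         *)

Definition barok (a : Q1 M) : bool :=
  match dk (s a), dk (t a) with
  | KC, _ | _, KC => true
  | KR, KH | KH, KR => true
  | _, _ => false
  end.

Definition gvert_ok (v : Q0 M * bool) : bool := v.2 ==> isC (dk v.1).
Definition garr_ok (x : Q1 M * bool) : bool := x.2 ==> barok x.1.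

Definition gsrc (x : Q1 M * bool) : Q0 M * bool :=
  let (a, b) := x in
  match dk (s a), dk (t a) with
  | KC, KC => if cj a then (s a, ~~ b) else (s a, b)
  | KC, _ => (s a, b)
  | _, _ => (s a, false)
  end.

Definition gtgt (x : Q1 M * bool) : Q0 M * bool :=
  let (a, b) := x in
  match dk (t a) with
  | KC => (t a, b)
  | _ => (t a, false)
  end.

Definition gpath := ((Q0 M * bool) * seq (Q1 M * bool))%type.

Fixpoint gchain (v : Q0 M * bool) (l : seq (Q1 M * bool)) : bool :=
  if l is x :: l' then (gsrc x == v) && gchain (gtgt x) l' else true.

Definition gvalid (p : gpath) : bool :=
  [&& gvert_ok p.1, all garr_ok p.2 & gchain p.1 p.2].

Definition gend (p : gpath) : Q0 M * bool := last p.1 (map gtgt p.2).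

Definition tauv (v : Q0 M * bool) : Q0 M * bool :=
  (v.1, if isC (dk v.1) then ~~ v.2 else v.2).
Definition taua (x : Q1 M * bool) : Q1 M * bool :=
  (x.1, if barok x.1 then ~~ x.2 else x.2).
Definition taup (p : gpath) : gpath := (tauv p.1, map taua p.2).

Definition is_fiber (q : gpath) (p : Q0 M * seq (Q1 M)) : Prop :=
  [/\ gvalid q, q.1.1 = p.1 & map fst q.2 = p.2].

Section PathAlgebra.
Variable R : realType.

Definition cg := gpath -> R[i].

Definition cg_supp (f : cg) : Prop := forall q, ~~ gvalid q -> f q = 0.

(* (f g)(r) = sum over r = p q (q first, then p) of f p * g q *)
Definition cg_mul (f g : cg) : cg := fun q =>
  \sum_(k < (size q.2).+1)
     f (gend (q.1, take k q.2), drop k q.2) * g (q.1, take k q.2).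

Definition cg_one : cg := fun q =>
  if (q.2 == [::]) && gvert_ok q.1 then 1 else 0.

Definition cg_delta (p : gpath) : cg := fun q => (q == p)%:R.

End PathAlgebra.

Section Tensor.
Variable R : realType.
Local Notation U := 'M[R[i]]_2.

(* the simple M(t a)-M(s a)-bimodule M(a): carrier = the larger division  *)
(* ring, action x . m . y = x m y (resp. x m \bar y for \bar C).           *)
Definition carrier (a : Q1 M) : U -> Prop := inD (kmax (dk (s a)) (dk (t a))).

Definition tw (a : Q1 M) (y : U) : U :=
  if [&& isC (dk (s a)), isC (dk (t a)) & cj a] then conjm y else y.

(* A representation of the modulation in an R-algebra B: unital algebra   *)
(* maps prod_i M(i) -> B (given by vm) and a bimodule map (+)_a M(a) -> B.  *)
Definition mod_rep (B : algType R) (vm : Q0 M -> U -> B)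
    (am : Q1 M -> U -> B) : Prop :=
  [/\ forall i x y, inD (dk i) x -> inD (dk i) y ->
        vm i (x + y) = vm i x + vm i y /\ vm i (x * y) = vm i x * vm i y,
      forall i (r : R), vm i (qmat r%:C 0) = r *: vm i 1,
      (forall i j, i != j -> vm i 1 * vm j 1 = 0) /\ \sum_i vm i 1 = 1,
      forall a m m', carrier a m -> carrier a m' ->
        am a (m + m') = am a m + am a m' &
      forall a x m y, inD (dk (t a)) x -> carrier a m -> inD (dk (s a)) y ->
        am a (x * m * tw a y) = vm (t a) x * am a m * vm (s a) y].

Definition alg_hom (B C : algType R) (f : B -> C) : Prop :=
  [/\ forall x y, f (x + y) = f x + f y,
      forall x y, f (x * y) = f x * f y,
      f 1 = 1 &
      forall (r : R) x, f (r *: x) = r *: f x].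

(* (T, vm, am) is the tensor algebra T(Q, M), characterised up to unique  *)
(* isomorphism by its universal property.                                 *)
Definition is_tensor_alg (T : algType R) (vm : Q0 M -> U -> T)
    (am : Q1 M -> U -> T) : Prop :=
  mod_rep vm am /\
  forall (B : algType R) (vm' : Q0 M -> U -> B) (am' : Q1 M -> U -> B),
    mod_rep vm' am' ->
    exists f : T -> B,
      [/\ alg_hom f,
          forall i x, inD (dk i) x -> f (vm i x) = vm' i x,
          forall a m, carrier a m -> f (am a m) = am' a m &
          forall g : T -> B, alg_hom g ->
            (forall i x, inD (dk i) x -> g (vm i x) = vm' i x) ->
            (forall a m, carrier a m -> g (am a m) = am' a m) ->
            forall z, g z = f z].

Section InT.
Variables (T : algType R) (vm : Q0 M -> U -> T) (am : Q1 M -> U -> T).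

Definition rspan (S : T -> Prop) (x : T) : Prop :=
  exists l : seq (R * T), (forall p, p \in l -> S p.2) /\
    x = \sum_(p <- l) p.1 *: p.2.

(* products am a_n m_n * ... * am a_1 m_1, m_k in M(a_k) *)
Fixpoint arr_prods (l : seq (Q1 M)) (y : T) : Prop :=
  if l is a :: l' then
    exists m z, [/\ carrier a m, arr_prods l' z & y = z * am a m]
  else y = 1.

Definition Mpath (p : Q0 M * seq (Q1 M)) (x : T) : Prop :=
  if p.2 is [::] then exists y, inD (dk p.1) y /\ x = vm p.1 y
  else rspan (arr_prods p.2) x.

Definition is_ideal (I : T -> Prop) : Prop :=
  [/\ I 0, forall x y, I x -> I y -> I (x + y),
      forall (r : R) x, I x -> I (r *: x),
      forall a x, I x -> I (a * x) & forall a x, I x -> I (x * a)].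

Definition ideal_gen (S : T -> Prop) : T -> Prop :=
  rspan (fun y => exists a z b, S z /\ y = a * z * b).

Definition Aideal : T -> Prop :=
  ideal_gen (fun z => exists a m, carrier a m /\ z = am a m).

Definition ideal_pow (A : T -> Prop) (m : nat) : T -> Prop :=
  rspan (fun y => exists l : seq T,
     [/\ size l = m, forall z, z \in l -> A z & y = \prod_(z <- l) z]).

Definition admissible (I : T -> Prop) : Prop :=
  is_ideal I /\ exists m, [/\ (2 <= m)%N,
     forall x, ideal_pow Aideal m x -> I x &
     forall x, I x -> ideal_pow Aideal 2 x].

(* (x, y) stands for x (x) 1 + y (x) i.                                   *)
Definition tc := (T * T)%type.
Definition tc_add (z w : tc) : tc := (z.1 + w.1, z.2 + w.2).
Definition tc_mul (z w : tc) : tc :=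
  (z.1 * w.1 - z.2 * w.2, z.1 * w.2 + z.2 * w.1).
Definition tc_scale (c : R[i]) (z : tc) : tc :=
  let: a +i* b := c in (a *: z.1 - b *: z.2, a *: z.2 + b *: z.1).

(* epsilon_i: 1 for M(i) in {R, C}; for M(i) = H the element of H (x) C    *)
(* mapped to the matrix unit E11 by h (x) c |-> c h, namely                *)
(* (1/2) (x) 1 + (-(1/2) i_H) (x) i, where i_H = qmat 'i 0 = diag(i, -i).   *)
Definition eps (i : Q0 M) : tc :=
  if dk i is KH then (vm i (qmat (2^-1 : R)%:C 0), vm i (qmat (- ((2^-1 : R)%:C * 'i)) 0))
  else (vm i 1, 0).

Definition ebf : tc := (\sum_i (eps i).1, \sum_i (eps i).2).

Definition sandwich (z : tc) : tc := tc_mul (tc_mul ebf z) ebf.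

Definition in_eTe (z : tc) : Prop := exists y, z = sandwich y.

Definition is_cx_iso (Psi : tc -> cg R) : Prop :=
  [/\ forall z w, in_eTe z -> in_eTe w ->
        forall q, Psi (tc_add z w) q = Psi z q + Psi w q,
      forall c z, in_eTe z -> forall q, Psi (tc_scale c z) q = c * Psi z q,
      forall z w, in_eTe z -> in_eTe w ->
        forall q, Psi (tc_mul z w) q = cg_mul (Psi z) (Psi w) q,
      forall q, Psi ebf q = cg_one R q &
      [/\ forall z, in_eTe z -> cg_supp (Psi z),
          forall z w, in_eTe z -> in_eTe w ->
            (forall q, Psi z q = Psi w q) -> z = w,
          forall f, cg_supp f -> exists z, in_eTe z /\ forall q, Psi z q = f q &
          (* Psi (e (M(p) (x) C) e) = (+)_{q fiber of p} C q *)
          forall p : Q0 M * seq (Q1 M), qchain p.1 p.2 ->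
            forall f : cg R,
              (exists z, [/\ Mpath p z.1, Mpath p z.2 &
                             forall q, Psi (sandwich z) q = f q])
              <-> (forall q, f q != 0 -> is_fiber q p)]].

Definition inJ (I : T -> Prop) (Psi : tc -> cg R) (f : cg R) : Prop :=
  exists z, [/\ I z.1, I z.2 & forall q, Psi (sandwich z) q = f q].

End InT.
End Tensor.
End Quiver.

From HB Require Import structures.
From mathcomp Require Import all_boot all_algebra.
From mathcomp Require Import reals complex.
From mathcomp Require Import ssrAC ring.

Set Implicit Arguments.
Unset Strict Implicit.
Unset Printing Implicit Defensive.

Import GRing.Theory Num.Theory.
Local Open Scope ring_scope.
Local Open Scope complex_scope.

(* The vertex v
   has two fibers (v, b), b : bool, and a fiber of the path al be is
   determined by the fiber of v it passes through: the fibers of al be are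
   exactly two paths fib b, and tau exchanges them.

   For the symmetry of J we use the C-antilinear ring automorphism
     sigma (x (x) 1 + y (x) i) = G x G^-1 (x) 1 - G y G^-1 (x) i
   of T (x)_R C, where G is j at the quaternion vertices and 1 elsewhere
   (conjugating by G is what makes sigma fix e).  sigma preserves
   e (T (x) C) e, I (x) C and every M(p) (x) C.  In the corner at v, a copy of
   C (x)_R C = C x C, the Psi-preimages of the trivial paths (v, b) are the two
   nonzero orthogonal idempotents, and sigma exchanges them.  The preimage of
   fib b factors through that of (v, b), so its image under sigma factors
   through (v, ~~ b): its Psi-image vanishes at fib b, while it is supported
   on the fibers of al be.  Hence it is a nonzero multiple of fib (~~ b),
   which therefore lies in J. *)

Ltac complex_eq := apply/eqP; rewrite eq_complex /=; apply/andP; split; apply/eqP.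

Ltac mx2_eq :=
  apply/matrixP; case=> [[|[|?]] ?]; case=> [[|[|?]] ?] //=; rewrite !mxE /=.

Section QuaternionMatrices.
Variable R : realType.
Implicit Types (a b c d : R[i]) (x y : 'M[R[i]]_2).

(* qmat a b is the quaternion a + b j; these are the rules of H = C + C j. *)
Lemma qmatM a b c d : qmat a b * qmat c d = qmat (a * c - b * d^*) (a * d + b * c^*).
Proof.
apply/matrixP=> i j; rewrite !mxE big_ord_recr big_ord_recr big_ord0 !mxE /=.
case: a b c d => [a1 a2] [b1 b2] [c1 c2] [d1 d2].
case: i => [[|[|i]] Hi] //=; case: j => [[|[|j]] Hj] //=; rewrite add0r;
  complex_eq; ring.
Qed.

Lemma qmatD a b c d : qmat a b + qmat c d = qmat (a + c) (b + d).
Proof.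
case: a b c d => [a1 a2] [b1 b2] [c1 c2] [d1 d2].
by mx2_eq; complex_eq; ring.
Qed.

Lemma qmatN a b : - qmat a b = qmat (- a) (- b).
Proof. case: a b => [a1 a2] [b1 b2]; by mx2_eq; complex_eq; ring. Qed.

Lemma qmat1 : qmat 1 0 = 1 :> 'M[R[i]]_2.
Proof. by mx2_eq; complex_eq; ring. Qed.

Lemma qmat0 : qmat 0 0 = 0 :> 'M[R[i]]_2.
Proof. by mx2_eq; complex_eq; ring. Qed.

Lemma conjm_qmat a b : conjm (qmat a b) = qmat a^* b^*.
Proof. case: a b => [a1 a2] [b1 b2]; by mx2_eq; complex_eq; ring. Qed.

Lemma inD1 k : inD k (1 : 'M[R[i]]_2).
Proof. by rewrite -qmat1; case: k => /=; [exists 1 | exists 1 | exists 1, 0]. Qed.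

Lemma inD0 k : inD k (0 : 'M[R[i]]_2).
Proof. by rewrite -qmat0; case: k => /=; [exists 0 | exists 0 | exists 0, 0]. Qed.

Lemma real_complexM (r s : R) : (r * s)%:C = r%:C * s%:C :> R[i].
Proof. by complex_eq; ring. Qed.

Lemma real_complexN (r : R) : (- r)%:C = - r%:C :> R[i].
Proof. by complex_eq; ring. Qed.

Lemma inDM k x y : inD k x -> inD k y -> inD k (x * y).
Proof.
case: k => /=.
- move=> [r ->] [s ->]; exists (r * s).
  by rewrite qmatM real_complexM mul0r subr0 mulr0 mul0r addr0.
- by move=> [r ->] [s ->]; exists (r * s); rewrite qmatM mul0r subr0 mulr0 mul0r addr0.
- by move=> [a [b ->]] [c [d ->]]; rewrite qmatM; do 2 eexists.
Qed.

Lemma inDN k x : inD k x -> inD k (- x).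
Proof.
case: k => /=.
- by move=> [r ->]; exists (- r); rewrite qmatN real_complexN oppr0.
- by move=> [r ->]; exists (- r); rewrite qmatN oppr0.
- by move=> [a [b ->]]; rewrite qmatN; do 2 eexists.
Qed.

Lemma inD_conj k x : inD k x -> inD k (conjm x).
Proof.
case: k => /=.
- by move=> [r ->]; exists r; rewrite conjm_qmat conjc_real conjc0.
- by move=> [r ->]; exists r^*; rewrite conjm_qmat conjc0.
- by move=> [a [b ->]]; rewrite conjm_qmat; do 2 eexists.
Qed.

Lemma inD_kmaxl k k' x : inD k x -> inD (kmax k k') x.
Proof.
have RC y : inD KR y -> inD KC y by move=> [r ->]; exists r%:C.
have CH y : inD KC y -> inD KH y by move=> [a ->]; exists a, 0.
by case: k; case: k' => //= H; by [apply: RC | apply: CH | apply/CH/RC].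
Qed.

Lemma inD_kmaxr k k' x : inD k' x -> inD (kmax k k') x.
Proof.
have -> : kmax k k' = kmax k' k by case: k; case: k'.
exact: inD_kmaxl.
Qed.
End QuaternionMatrices.

Section ModulationRep.
Variables (R : realType) (M : mquiver) (T : algType R).
Variables (vm : Q0 M -> 'M[R[i]]_2 -> T) (am : Q1 M -> 'M[R[i]]_2 -> T).
Hypothesis Hrep : mod_rep vm am.
Local Notation D i := (@inD R (dk i)).
Implicit Types (x y m : 'M[R[i]]_2) (f g : Q0 M -> 'M[R[i]]_2).

Lemma vmD i x y : D i x -> D i y -> vm i (x + y) = vm i x + vm i y.
Proof. by case: Hrep => H _ _ _ _ Hx Hy; case: (H i x y Hx Hy). Qed.

Lemma vmM i x y : D i x -> D i y -> vm i (x * y) = vm i x * vm i y.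
Proof. by case: Hrep => H _ _ _ _ Hx Hy; case: (H i x y Hx Hy). Qed.

Lemma vm0 i : vm i 0 = 0.
Proof.
have := vmD (inD0 _ (dk i)) (inD0 _ (dk i)); rewrite addr0 => /eqP.
by rewrite -subr_eq subrr eq_sym => /eqP.
Qed.

Lemma vmN i x : D i x -> vm i (- x) = - vm i x.
Proof. by move=> Hx; apply/eqP; rewrite -addr_eq0 -vmD ?addNr ?vm0 //; exact: inDN. Qed.

Lemma vmB i x y : D i x -> D i y -> vm i (x - y) = vm i x - vm i y.
Proof. by move=> Hx Hy; rewrite vmD ?vmN //; exact: inDN. Qed.

Lemma vm1l i x : D i x -> vm i 1 * vm i x = vm i x.
Proof. by move=> Hx; rewrite -vmM ?mul1r //; exact: inD1. Qed.

Lemma vm1r i x : D i x -> vm i x * vm i 1 = vm i x.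
Proof. by move=> Hx; rewrite -vmM ?mulr1 //; exact: inD1. Qed.

Lemma vm_orth i j x y : i != j -> D i x -> D j y -> vm i x * vm j y = 0.
Proof.
case: Hrep => _ _ [Ho _] _ _ Hij Hx Hy.
by rewrite -(vm1r Hx) -(vm1l Hy) mulrA -(mulrA (vm i x)) Ho // mulr0 mul0r.
Qed.

Definition vdiag f : T := \sum_i vm i (f i).

Lemma vdiag_vm_l f j y : (forall i, D i (f i)) -> D j y -> vdiag f * vm j y = vm j (f j * y).
Proof.
move=> Hf Hy; rewrite mulr_suml (bigD1 j) //= big1 ?addr0 ?vmM //.
by move=> i Hij; rewrite vm_orth.
Qed.

Lemma vdiag_vm_r f j y : (forall i, D i (f i)) -> D j y -> vm j y * vdiag f = vm j (y * f j).
Proof.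
move=> Hf Hy; rewrite mulr_sumr (bigD1 j) //= big1 ?addr0 ?vmM //.
by move=> i Hij; rewrite vm_orth // eq_sym.
Qed.

Lemma vdiagM f g : (forall i, D i (f i)) -> (forall i, D i (g i)) ->
  vdiag f * vdiag g = vdiag (fun i => f i * g i).
Proof. by move=> Hf Hg; rewrite mulr_suml; apply: eq_bigr => i _; exact: vdiag_vm_r. Qed.

Lemma vdiag1 : vdiag (fun=> 1) = 1.
Proof. by case: Hrep => _ _ [_ H] _ _; exact: H. Qed.

Lemma tw1 (a : Q1 M) : tw a 1 = 1 :> 'M[R[i]]_2.
Proof. by rewrite /tw; case: ifP => // _; rewrite -qmat1 conjm_qmat conjc1 conjc0. Qed.

Lemma inD_tw (a : Q1 M) y : D (src a) y -> D (src a) (tw a y).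
Proof. by rewrite /tw; case: ifP => // _; apply: inD_conj. Qed.

Lemma am_vm1 a m : carrier a m -> am a m = vm (tgt a) 1 * am a m * vm (src a) 1.
Proof.
case: Hrep => _ _ _ _ H Hm; have := H a 1 m 1 (inD1 _ _) Hm (inD1 _ _).
by rewrite tw1 mul1r mulr1.
Qed.

Lemma am_vm1r a m : carrier a m -> am a m * vm (src a) 1 = am a m.
Proof. by move=> Hm; rewrite {1}(am_vm1 Hm) -mulrA (vm1l (inD1 _ _)) -(am_vm1 Hm). Qed.

Lemma am_vm1l a m : carrier a m -> vm (tgt a) 1 * am a m = am a m.
Proof. by move=> Hm; rewrite {1}(am_vm1 Hm) !mulrA (vm1l (inD1 _ _)) -(am_vm1 Hm). Qed.

Lemma vm_am i x a m : D i x -> carrier a m ->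
  vm i x * am a m = if i == tgt a then am a (x * m) else 0.
Proof.
move=> Hx Hm; case: eqP => [Hi|/eqP Hne]; first subst i.
  case: Hrep => _ _ _ _ H; have := H a x m 1 Hx Hm (inD1 _ _).
  by rewrite tw1 mulr1 -mulrA am_vm1r // => ->.
by rewrite -(am_vm1l Hm) mulrA vm_orth ?mul0r //; exact: inD1.
Qed.

Lemma am_vm i y a m : D i y -> carrier a m ->
  am a m * vm i y = if i == src a then am a (m * tw a y) else 0.
Proof.
move=> Hy Hm; case: eqP => [Hi|/eqP Hne]; first subst i.
  case: Hrep => _ _ _ _ H; have := H a 1 m y (inD1 _ _) Hm Hy.
  by rewrite mul1r am_vm1l // => ->.
by rewrite -(am_vm1r Hm) -mulrA vm_orth ?mulr0 //; [rewrite eq_sym | exact: inD1].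
Qed.

Lemma vdiag_am f a m : (forall i, D i (f i)) -> carrier a m ->
  vdiag f * am a m = am a (f (tgt a) * m).
Proof.
move=> Hf Hm; rewrite mulr_suml (bigD1 (tgt a)) //= big1 ?addr0 ?vm_am ?eqxx //.
by move=> i Hi; rewrite vm_am // (negbTE Hi).
Qed.

Lemma am_vdiag f a m : (forall i, D i (f i)) -> carrier a m ->
  am a m * vdiag f = am a (m * tw a (f (src a))).
Proof.
move=> Hf Hm; rewrite mulr_sumr (bigD1 (src a)) //= big1 ?addr0 ?am_vm ?eqxx //.
by move=> i Hi; rewrite am_vm // (negbTE Hi).
Qed.
End ModulationRep.

Section Complexification.
Variables (R : realType) (T : algType R).
Implicit Types x y z : tc T.

Lemma tc_mulA x y z : tc_mul (tc_mul x y) z = tc_mul x (tc_mul y z).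
Proof.
case: x y z => [a b] [c d] [e f]; rewrite /tc_mul /=.
congr (_, _); rewrite ?mulrDr ?mulrDl ?mulrBr ?mulrBl ?mulNr ?mulrN ?opprD ?opprK
  ?mulrA ?addrA; by rewrite [LHS](ACl (1*3*4*2)).
Qed.

Lemma tc_mul0r x : tc_mul x (0, 0) = (0, 0).
Proof. by rewrite /tc_mul !mulr0 subrr addr0. Qed.

Lemma tc_mul0l x : tc_mul (0, 0) x = (0, 0).
Proof. by rewrite /tc_mul !mul0r subrr addr0. Qed.

Lemma tc_scale_mull (c : R[i]) x y : tc_mul (tc_scale c x) y = tc_scale c (tc_mul x y).
Proof.
case: c x y => [a b] [x1 x2] [y1 y2]; rewrite /tc_mul /tc_scale /=.
congr (_, _); rewrite ?scalerDr ?scalerBr ?mulrDl ?mulrBl ?mulNr ?opprD ?opprK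
  -?scalerAl ?scalerN ?addrA; by rewrite [LHS](ACl (1*3*4*2)).
Qed.

Lemma tc_scale_mulr (c : R[i]) x y : tc_mul x (tc_scale c y) = tc_scale c (tc_mul x y).
Proof.
case: c x y => [a b] [x1 x2] [y1 y2]; rewrite /tc_mul /tc_scale /=.
congr (_, _); rewrite ?scalerDr ?scalerBr ?mulrDr ?mulrBr ?mulrN ?opprD ?opprK
  -?scalerAr ?scalerN ?addrA; by rewrite [LHS](ACl (1*3*2*4)).
Qed.

Definition conj_by (G G' : T) z : tc T := (G * z.1 * G', - (G * z.2 * G')).

Lemma conj_byM G G' x y : G' * G = 1 ->
  conj_by G G' (tc_mul x y) = tc_mul (conj_by G G' x) (conj_by G G' y).
Proof.
move=> HG; case: x y => [a b] [c d]; rewrite /conj_by /tc_mul /=.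
have E u v : G * u * G' * (G * v * G') = G * (u * v) * G'.
  by rewrite !mulrA -(mulrA _ G' G) HG mulr1 -!mulrA.
rewrite ?mulrN ?mulNr ?opprK !E.
by congr (_, _); rewrite ?mulrBr ?mulrBl ?mulrDr ?mulrDl ?opprD.
Qed.

Lemma conj_by_eq0 G G' x : G' * G = 1 -> conj_by G G' x = (0, 0) -> x = (0, 0).
Proof.
move=> HG; case: x => [a b]; rewrite /conj_by /= => [[E1 /eqP]].
rewrite oppr_eq0 => /eqP E2.
have K u : G' * (G * u * G') * G = u by rewrite !mulrA HG mul1r -mulrA HG mulr1.
by rewrite -(K a) -(K b) E1 E2 !mulr0 !mul0r.
Qed.

Section ComplexifiedIdeal.
Variable I : T -> Prop.
Hypothesis HI : is_ideal I.

Definition tc_ideal z : Prop := I z.1 /\ I z.2.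

Lemma ideal_add (x y : T) : I x -> I y -> I (x + y).
Proof. by case: HI => _ HD _ _ _; apply: HD. Qed.

Lemma ideal_opp (x : T) : I x -> I (- x).
Proof. by case: HI => _ _ HZ _ _ Hx; rewrite -scaleN1r; apply: HZ. Qed.

Lemma ideal_scale (r : R) (x : T) : I x -> I (r *: x).
Proof. by case: HI => _ _ HZ _ _; apply: HZ. Qed.

Lemma ideal_mull (a x : T) : I x -> I (a * x).
Proof. by case: HI => _ _ _ HL _; apply: HL. Qed.

Lemma ideal_mulr (a x : T) : I x -> I (x * a).
Proof. by case: HI => _ _ _ _ HR; apply: HR. Qed.

Lemma tc_ideal_mull a z : tc_ideal z -> tc_ideal (tc_mul a z).
Proof.
by case=> H1 H2; split; [apply: ideal_add; last apply: ideal_opp | apply: ideal_add];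
  apply: ideal_mull.
Qed.

Lemma tc_ideal_mulr z a : tc_ideal z -> tc_ideal (tc_mul z a).
Proof.
by case=> H1 H2; split; [apply: ideal_add; last apply: ideal_opp | apply: ideal_add];
  apply: ideal_mulr.
Qed.

Lemma tc_ideal_conj_by G G' z : tc_ideal z -> tc_ideal (conj_by G G' z).
Proof.
by case=> H1 H2; split; rewrite /=; [|apply: ideal_opp]; apply: ideal_mulr; apply: ideal_mull.
Qed.

Lemma tc_ideal_scale c z : tc_ideal z -> tc_ideal (tc_scale c z).
Proof.
case: c => a b [H1 H2]; split; rewrite /=;
  [apply: ideal_add; last apply: ideal_opp | apply: ideal_add];
  exact: ideal_scale.
Qed.
End ComplexifiedIdeal.
End Complexification.

Section SplitComplex.
Variable R : realType.
Implicit Types a c s u : R[i].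

(* Pairs (a, c) of complex numbers with the product of e_v (T (x) C) e_v    *)
(* for a C-vertex v, (a, c) (a', c') = (a a' - c c', a c' + c a'), form the *)
(* algebra C (x)_R C.  The maps (a, c) |-> a + s c with s = i or s = -i     *)
(* identify it with C x C.                                                  *)
Lemma split_mul s a c (a' c' : R[i]) : s * s = -1 ->
  (a + s * c) * (a' + s * c') = (a * a' - c * c') + s * (a * c' + c * a').
Proof.
move=> Hs; transitivity (a * a' + s * s * (c * c') + s * (a * c' + c * a')); first ring.
by rewrite Hs; ring.
Qed.

Lemma idem01 u : u * u = u -> u = 0 \/ u = 1.
Proof.
move=> H; have : u * (u - 1) = 0 by rewrite mulrBr mulr1 H subrr.
by move/eqP; rewrite mulf_eq0 subr_eq0 => /orP [/eqP|/eqP]; [left|right].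
Qed.

(* C x C has exactly two nonzero orthogonal idempotents, (1,0) and (0,1); *)
(* in C (x)_R C they are (1/2, -i/2) and (1/2, i/2), exchanged by        *)
(* (a, c) |-> (a, -c).                                                   *)
Lemma orthogonal_idempotents_conj a c (a' c' : R[i]) :
  a * a - c * c = a -> a * c + c * a = c ->
  a' * a' - c' * c' = a' -> a' * c' + c' * a' = c' ->
  a * a' - c * c' = 0 -> a * c' + c * a' = 0 ->
  ~ (a = 0 /\ c = 0) -> ~ (a' = 0 /\ c' = 0) ->
  a' = a /\ c' = - c.
Proof.
move=> H1 H2 H3 H4 H5 H6 Hn Hn'.
have ii : 'i * 'i = -1 :> R[i] by complex_eq; ring.
have mii : - 'i * - 'i = -1 :> R[i] by rewrite mulrNN.
have idem (s x y : R[i]) : s * s = -1 -> x * x - y * y = x -> x * y + y * x = y ->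
    (x + s * y) * (x + s * y) = x + s * y.
  by move=> Hs Hx Hy; rewrite split_mul // Hx Hy.
have two0 : (2 : R[i]) != 0 by rewrite pnatr_eq0.
have i0 : ('i : R[i]) != 0 by apply/eqP => /eqP; rewrite eq_complex /= oner_eq0 andbF.
have back (x y p m : R[i]) : x + 'i * y = p -> x + - 'i * y = m ->
    x = (p + m) / 2 /\ y = (p - m) / (2 * 'i).
  by move=> <- <-; rewrite mulNr; split; field; rewrite ?mulf_neq0.
(* Both images a + i c and a - i c of each idempotent are 0 or 1; products *)
(* and non-vanishing leave only the cases (1, 0), (0, 1) and (0, 1), (1, 0). *)
have [Hp|Hp] := idem01 (idem _ _ _ ii H1 H2); have [Hm|Hm] := idem01 (idem _ _ _ mii H1 H2);
have [Hp'|Hp'] := idem01 (idem _ _ _ ii H3 H4); have [Hm'|Hm'] := idem01 (idem _ _ _ mii H3 H4);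
have := split_mul a c a' c' ii; have := split_mul a c a' c' mii;
rewrite H5 H6 !mulr0 !addr0 ?Hp ?Hm ?Hp' ?Hm' ?mul0r ?mulr0 ?mul1r;
move=> /eqP; rewrite ?oner_eq0 // => _ /eqP; rewrite ?oner_eq0 // => _.
all: try (by case: Hn; case: (back _ _ _ _ Hp Hm) => -> ->; rewrite ?addr0 ?subrr ?mul0r).
all: try (by case: Hn'; case: (back _ _ _ _ Hp' Hm') => -> ->; rewrite ?addr0 ?subrr ?mul0r).
all: case: (back _ _ _ _ Hp Hm) => -> ->; case: (back _ _ _ _ Hp' Hm') => -> ->.
all: by split; field; rewrite ?mulf_neq0.
Qed.
End SplitComplex.

Section PathAlgebra.
Variables (M : mquiver) (R : realType).
Implicit Types (f g : cg M R) (x y p : gpath M).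

Lemma cg_mul_ext f f' g g' : f =1 f' -> g =1 g' -> cg_mul f g =1 cg_mul f' g'.
Proof. by move=> Hf Hg q; rewrite /cg_mul; apply: eq_bigr => k _; rewrite Hf Hg. Qed.

Lemma cg_mul_delta x y q :
  cg_mul (cg_delta R x) (cg_delta R y) q =
  ((gend y == x.1) && (q == (y.1, y.2 ++ x.2)))%:R.
Proof.
rewrite /cg_mul /cg_delta; case: q => [q1 l]; case: x => [x1 lx]; case: y => [y1 ly] /=.
case Hc: ((gend (y1, ly) == x1) && ((q1, l) == (y1, ly ++ lx))).
  move/andP: Hc => [/eqP Hg /eqP [-> ->]].
  have Hk : (size ly < (size (ly ++ lx)).+1)%N by rewrite size_cat ltnS leq_addr.
  rewrite (bigD1 (Ordinal Hk)) //= take_size_cat // drop_size_cat // Hg !eqxx mulr1.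
  rewrite big1 ?addr0 // => k /eqP Hne.
  case: ((y1, take k (ly ++ lx)) =P (y1, ly)) => [[Ht]|]; last by rewrite mulr0.
  exfalso; apply: Hne; apply: val_inj => /=.
  have := congr1 size Ht; rewrite size_take; case: ltnP => //.
  by have := ltn_ord k; rewrite ltnS => h1 h2 <-; apply/eqP; rewrite eqn_leq h1 h2.
rewrite big1 // => k _.
case: eqP => [[Hg Hd]|]; last by rewrite mul0r.
case: eqP => [[E1 Ht]|]; last by rewrite mulr0.
by move: Hc; rewrite -Hd -Ht -E1 cat_take_drop -Hg !eqxx.
Qed.

Lemma cg_mul_delta_vertex (u w : Q0 M * bool) q :
  cg_mul (cg_delta R (u, [::])) (cg_delta R (w, [::])) q =
  ((w == u) && (q == (w, [::])))%:R.
Proof. by rewrite cg_mul_delta. Qed.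

Lemma cg_mul_delta_unit_r x : cg_mul (cg_delta R x) (cg_delta R (x.1, [::])) =1 cg_delta R x.
Proof. by case: x => x1 l q; rewrite cg_mul_delta /= eqxx. Qed.

Lemma cg_mul_delta_mid0 f g x p :
  (forall k, gend (p.1, take k p.2) != x.1) ->
  cg_mul (cg_mul f (cg_delta R x)) g p = 0.
Proof.
move=> H; rewrite {1}/cg_mul big1 // => k _.
rewrite /cg_mul big1 ?mul0r // => j _; rewrite /cg_delta.
case: eqP => [E|]; last by rewrite mulr0.
by move: (H k); rewrite -E eqxx.
Qed.
End PathAlgebra.

Lemma tree_noloop (M : mquiver) (a : Q1 M) : is_tree M -> src a != tgt a.
Proof.
case=> _ H; have := H [:: (a, true)] isT isT.
by rewrite /cycle /= /wtgt /wsrc /= andbT eq_sym.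
Qed.

Section TwoArrowFibers.
Variables (M : mquiver) (be al : Q1 M).
Hypothesis Hv : tgt be = src al.
Hypothesis HC : dk (src al) = KC.
Local Notation v := (src al).
Local Arguments gsrc : simpl never.
Local Arguments gtgt : simpl never.

(* Fiber of al entering (v, b): its barring is determined by b. *)
Definition al_bar (b : bool) : bool := if isC (dk (tgt al)) && cj al then ~~ b else b.

Definition vpath (b : bool) : gpath M := ((v, b), [::]).
Definition al_path (b : bool) : gpath M := ((v, b), [:: (al, al_bar b)]).
Definition be_path (b : bool) : gpath M := (gsrc (be, b), [:: (be, b)]).
Definition fib (b : bool) : gpath M := (gsrc (be, b), [:: (be, b); (al, al_bar b)]).

Lemma al_barN b : al_bar (~~ b) = ~~ al_bar b.
Proof. by rewrite /al_bar; case: ifP. Qed.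

Lemma gtgt_be b : gtgt (be, b) = (v, b).
Proof. by rewrite /gtgt Hv HC. Qed.

Lemma gsrc_al b : gsrc (al, al_bar b) = (v, b).
Proof.
rewrite /gsrc /al_bar HC; case: (dk (tgt al)) => //=.
by case: (cj al); rewrite ?negbK.
Qed.

Lemma gsrc_fst (a : Q1 M) b : (gsrc (a, b)).1 = src a.
Proof. by rewrite /gsrc; case: (dk (src a)); case: (dk (tgt a)) => //; case: (cj a). Qed.

Lemma gtgt_fst (x : Q1 M * bool) : (gtgt x).1 = tgt x.1.
Proof. by case: x => a c; rewrite /gtgt; case: (dk (tgt a)). Qed.

Lemma barok_be : barok be. Proof. by rewrite /barok Hv HC; case: (dk (src be)). Qed.
Lemma barok_al : barok al. Proof. by rewrite /barok HC; case: (dk (tgt al)). Qed.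

Lemma vpath_valid b : gvalid (vpath b).
Proof. by rewrite /gvalid /= /gvert_ok /= HC implybT. Qed.

Lemma al_path_valid b : gvalid (al_path b).
Proof.
rewrite /gvalid /= /gvert_ok /= HC implybT /garr_ok /= barok_al implybT /=.
by rewrite gsrc_al eqxx.
Qed.

Lemma be_path_valid b : gvalid (be_path b).
Proof.
rewrite /gvalid /= eqxx /garr_ok /= barok_be implybT /= andbT /gvert_ok /gsrc Hv HC.
by case E: (dk (src be)) => //=; case: (cj be); rewrite /= E ?implybT.
Qed.

Lemma fib_valid b : gvalid (fib b).
Proof.
have /and3P [H1 /andP [H2 _] /andP [H3 _]] := be_path_valid b.
by rewrite /gvalid /= H1 H2 H3 /garr_ok /= barok_al gtgt_be gsrc_al eqxx implybT.
Qed.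

Lemma fib_fiber b : is_fiber (fib b) (src be, [:: be; al]).
Proof. by split; [exact: fib_valid | exact: gsrc_fst | ]. Qed.

Lemma fiberP q : is_fiber q (src be, [:: be; al]) -> exists b, q = fib b.
Proof.
case: q => [q1 [|[a1 b1] [|[a2 b2] [|x l]]]] [Hval H1 /= H2] //.
case: H2 => E1 E2; subst a1 a2; exists b1.
move: Hval; rewrite /gvalid /= gtgt_be => /and3P [_ _ /and3P [/eqP H3 /eqP H4 _]].
rewrite /fib H3; congr (_, [:: _; (al, _)]).
move: H4; rewrite /gsrc /al_bar HC.
by case: (dk (tgt al)); case: (cj al) => /= -[<-]; rewrite ?negbK.
Qed.

Lemma taup_fib b : taup (fib b) = fib (~~ b).
Proof.
rewrite /taup /fib /= /taua /= barok_be barok_al al_barN; congr (_, _).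
by rewrite /tauv /gsrc Hv HC; case E: (dk (src be)) => //=; try case: (cj be); rewrite /= E.
Qed.

Lemma fib_neq b : fib b <> fib (~~ b).
Proof. by rewrite /fib; case=> _ /eqP; case: b. Qed.

Lemma fib_split (R : realType) b :
  cg_mul (cg_delta R (al_path b)) (cg_delta R (be_path b)) =1 cg_delta R (fib b).
Proof. by move=> q; rewrite cg_mul_delta /gend /= gtgt_be eqxx. Qed.

Lemma fib_avoids b : src be != v -> tgt al != v ->
  forall k, gend ((fib b).1, take k (fib b).2) != (v, ~~ b).
Proof.
move=> H1 H2 [|[|k]]; rewrite /gend /=.
- by apply/eqP => /(congr1 fst); rewrite gsrc_fst; apply/eqP.
- by rewrite gtgt_be; apply/eqP; case; case: b.
- by apply/eqP => /(congr1 fst); rewrite gtgt_fst; apply/eqP.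
Qed.
End TwoArrowFibers.

Section Conjugation.
Variables (R : realType) (M : mquiver) (T : algType R).
Variables (vm : Q0 M -> 'M[R[i]]_2 -> T) (am : Q1 M -> 'M[R[i]]_2 -> T).
Hypothesis Hrep : mod_rep vm am.
Local Notation D i := (@inD R (dk i)).
Local Notation e := (ebf vm).
Local Notation sandwich := (sandwich vm).
Local Notation in_eTe := (in_eTe vm).
Implicit Types (z w : tc T).

Definition eps_re (i : Q0 M) : 'M[R[i]]_2 := if dk i is KH then qmat (2^-1 : R)%:C 0 else 1.
Definition eps_im (i : Q0 M) : 'M[R[i]]_2 :=
  if dk i is KH then qmat (- ((2^-1 : R)%:C * 'i)) 0 else 0.

Lemma D_eps_re i : D i (eps_re i).
Proof. by rewrite /eps_re; case: (dk i); [exact: inD1 | exact: inD1 | do 2 eexists]. Qed.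

Lemma D_eps_im i : D i (eps_im i).
Proof. by rewrite /eps_im; case: (dk i); [exact: inD0 | exact: inD0 | do 2 eexists]. Qed.

Lemma ebfE : e = (vdiag vm eps_re, vdiag vm eps_im).
Proof.
rewrite /ebf; congr (_, _); apply: eq_bigr => i _; rewrite /eps /eps_re /eps_im;
  by case: (dk i) => //=; rewrite (vm0 Hrep).
Qed.

(* Each epsilon_i is idempotent in M(i) (x) C, hence e is idempotent. *)
Lemma eps_idem i : eps_re i * eps_re i - eps_im i * eps_im i = eps_re i /\
                   eps_re i * eps_im i + eps_im i * eps_re i = eps_im i.
Proof.
rewrite /eps_re /eps_im; case: (dk i); rewrite ?mulr1 ?mul0r ?subr0 ?addr0 ?mulr0 //.
rewrite !qmatM !qmatN !qmatD !mulr0 !mul0r ?subr0 ?addr0 ?oppr0 ?addr0.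
by split; congr (qmat _ _); complex_eq; field.
Qed.

Lemma ebf_idem : tc_mul e e = e.
Proof.
have Dre := D_eps_re; have Dim := D_eps_im.
rewrite ebfE /tc_mul /= !(vdiagM Hrep) // /vdiag -sumrB -big_split /=.
congr (_, _); apply: eq_bigr => i _; have [E1 E2] := eps_idem i.
  by rewrite -(vmB Hrep) ?E1 //; apply: inDM.
by rewrite -(vmD Hrep) ?E2 //; apply: inDM.
Qed.

Lemma in_eTeE z : in_eTe z <-> sandwich z = z.
Proof.
split; last by move=> <-; exists z.
by case=> y ->; rewrite /sandwich !tc_mulA ebf_idem -!tc_mulA ebf_idem !tc_mulA.
Qed.

Lemma eTe_l z : in_eTe z -> tc_mul e z = z.
Proof. by case=> y ->; rewrite /sandwich -!tc_mulA ebf_idem. Qed.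

Lemma eTe_r z : in_eTe z -> tc_mul z e = z.
Proof. by case=> y ->; rewrite /sandwich !tc_mulA ebf_idem. Qed.

Lemma eTe_mul z w : in_eTe z -> in_eTe w -> in_eTe (tc_mul z w).
Proof.
move=> Hz Hw; apply/in_eTeE.
by rewrite /sandwich -tc_mulA (eTe_l Hz) tc_mulA (eTe_r Hw).
Qed.

Lemma eTe0 : in_eTe (0, 0).
Proof. by exists (0, 0); rewrite /sandwich tc_mul0r tc_mul0l. Qed.

Lemma eTe_scale c z : in_eTe z -> in_eTe (tc_scale c z).
Proof.
move=> /in_eTeE Hz; apply/in_eTeE.
by rewrite /sandwich tc_scale_mulr tc_scale_mull -/(sandwich z) Hz.
Qed.

Definition jq (i : Q0 M) : 'M[R[i]]_2 := if dk i is KH then qmat 0 1 else 1.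
Definition jq_inv (i : Q0 M) : 'M[R[i]]_2 := if dk i is KH then qmat 0 (-1) else 1.

Lemma D_jq i : D i (jq i).
Proof. by rewrite /jq; case: (dk i); [exact: inD1 | exact: inD1 | do 2 eexists]. Qed.

Lemma D_jq_inv i : D i (jq_inv i).
Proof. by rewrite /jq_inv; case: (dk i); [exact: inD1 | exact: inD1 | do 2 eexists]. Qed.

Definition G : T := vdiag vm jq.
Definition G_inv : T := vdiag vm jq_inv.

Lemma jqK i : jq_inv i * jq i = 1 /\ jq i * jq_inv i = 1.
Proof.
rewrite /jq_inv /jq; case: (dk i); rewrite ?mulr1 // !qmatM -qmat1.
by split; congr (qmat _ _); complex_eq; ring.
Qed.

Lemma G_invK : G_inv * G = 1.
Proof.
rewrite /G /G_inv (vdiagM Hrep D_jq_inv D_jq) -(vdiag1 Hrep).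
by apply: eq_bigr => i _; rewrite (jqK i).1.
Qed.

Lemma GK : G * G_inv = 1.
Proof.
rewrite /G /G_inv (vdiagM Hrep D_jq D_jq_inv) -(vdiag1 Hrep).
by apply: eq_bigr => i _; rewrite (jqK i).2.
Qed.

Definition sigma : tc T -> tc T := conj_by G G_inv.

Lemma sigmaM z w : sigma (tc_mul z w) = tc_mul (sigma z) (sigma w).
Proof. exact/conj_byM/G_invK. Qed.

Lemma sigma_eq0 z : sigma z = (0, 0) -> z = (0, 0).
Proof. exact/conj_by_eq0/G_invK. Qed.

(* Conjugating epsilon_i = (1 - i_H (x) i)/2 by j_i turns it into its    *)
(* complex conjugate; this is why sigma fixes e.                         *)
Lemma sigma_ebf : sigma e = e.
Proof.
have D3 f g h : (forall i, D i (f i)) -> (forall i, D i (g i)) -> (forall i, D i (h i)) ->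
    vdiag vm f * vdiag vm g * vdiag vm h = vdiag vm (fun i => f i * g i * h i).
  by move=> Hf Hg Hh; rewrite !(vdiagM Hrep) // => i; apply: inDM.
have Dj := D_jq; have Dji := D_jq_inv; have Dre := D_eps_re; have Dim := D_eps_im.
rewrite /sigma /conj_by ebfE /= /G /G_inv !D3 //; congr (_, _).
- apply: eq_bigr => i _; congr (vm _ _); rewrite /jq /eps_re /jq_inv.
  by case: (dk i); rewrite ?mulr1 ?mul1r // !qmatM; congr (qmat _ _); complex_eq; ring.
- rewrite /vdiag -sumrN; apply: eq_bigr => i _.
  have Dijj : D i (jq i * eps_im i * jq_inv i) by apply/inDM/Dji/inDM.
  rewrite -(vmN Hrep Dijj).
  congr (vm _ _); rewrite /jq /eps_im /jq_inv; case: (dk i); rewrite ?mulr1 ?mul1r ?oppr0 //.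
  by rewrite !qmatM qmatN; congr (qmat _ _); complex_eq; ring.
Qed.

Lemma sigma_sandwich z : sigma (sandwich z) = sandwich (sigma z).
Proof. by rewrite /sandwich !sigmaM sigma_ebf. Qed.

Lemma sigma_eTe z : in_eTe z -> in_eTe (sigma z).
Proof. by case=> y ->; rewrite sigma_sandwich; exists (sigma y). Qed.

(* Conjugation by G maps each M(p) into itself, hence sigma maps each *)
(* M(p) (x) C into itself.                                             *)
Lemma rspan_mul2 (S : T -> Prop) (A B x : T) :
  (forall y, S y -> S (A * y * B)) -> rspan S x -> rspan S (A * x * B).
Proof.
move=> HS [l [Hl ->]]; exists [seq (p.1, A * p.2 * B) | p <- l]; split.
  by move=> p /mapP [q Hq ->] /=; apply: HS; apply: Hl.
rewrite big_map mulr_sumr mulr_suml; apply: eq_bigr => p _.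
by rewrite -scalerAr -scalerAl.
Qed.

Lemma G_am a m : carrier a m -> carrier a (jq (tgt a) * m * tw a (jq_inv (src a))) /\
  G * am a m * G_inv = am a (jq (tgt a) * m * tw a (jq_inv (src a))).
Proof.
move=> Hm; have Hjm : carrier a (jq (tgt a) * m) by apply/inDM/Hm/inD_kmaxr/D_jq.
split; first exact/inDM/inD_kmaxl/inD_tw/D_jq_inv.
by rewrite /G /G_inv (vdiag_am Hrep D_jq Hm) (am_vdiag Hrep D_jq_inv Hjm).
Qed.

Lemma arr_prods_conj l (y : T) : arr_prods am l y -> arr_prods am l (G * y * G_inv).
Proof.
elim: l y => [|a l IH] y /=; first by move=> ->; rewrite mulr1 GK.
case=> m [z [Hm Hz ->]]; have [Hm' Em] := G_am Hm.
exists (jq (tgt a) * m * tw a (jq_inv (src a))), (G * z * G_inv); split => //; first exact: IH.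
by rewrite -Em !mulrA -(mulrA _ G_inv G) G_invK mulr1.
Qed.

Lemma Mpath_conj p (x : T) : Mpath vm am p x -> Mpath vm am p (G * x * G_inv).
Proof.
rewrite /Mpath; case: p.2 => [|a l]; last by apply: rspan_mul2 => y; exact: arr_prods_conj.
case=> y [Hy ->]; exists (jq p.1 * y * jq_inv p.1); split; first exact/inDM/D_jq_inv/inDM/Hy/D_jq.
by rewrite /G /G_inv (vdiag_vm_l Hrep D_jq Hy) (vdiag_vm_r Hrep D_jq_inv) //; exact/inDM/Hy/D_jq.
Qed.

Lemma Mpath_opp p (x : T) : Mpath vm am p x -> Mpath vm am p (- x).
Proof.
rewrite /Mpath; case: p.2 => [|a l].
  by case=> y [Hy ->]; exists (- y); split; [exact: inDN | rewrite (vmN Hrep)].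
case=> l' [Hl ->]; exists [seq (- q.1, q.2) | q <- l']; split.
  by move=> q /mapP [q' Hq ->]; exact: (Hl q' Hq).
by rewrite big_map -sumrN; apply: eq_bigr => q _; rewrite scaleNr.
Qed.

Lemma Mpath_sigma p z : Mpath vm am p z.1 -> Mpath vm am p z.2 ->
  Mpath vm am p (sigma z).1 /\ Mpath vm am p (sigma z).2.
Proof. by move=> H1 H2; split; [|apply: Mpath_opp]; apply: Mpath_conj. Qed.

(* The corner e_v (T (x) C) e_v at a C-vertex v contains the elements   *)
(* blk v a c = a (x) 1 + c (x) i with a, c in M(v) = C; on them sigma is *)
(* a + c i |-> a - c i.                                                  *)
Section CVertexBlock.
Variable v : Q0 M.
Hypothesis HvC : dk v = KC.

Definition blk (a c : R[i]) : tc T := (vm v (qmat a 0), vm v (qmat c 0)).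

Lemma D_qmatC (a : R[i]) : D v (qmat a 0). Proof. by rewrite HvC; exists a. Qed.

Lemma vm_qmatM a b : vm v (qmat a 0) * vm v (qmat b 0) = vm v (qmat (a * b) 0).
Proof. by rewrite -(vmM Hrep (D_qmatC a) (D_qmatC b)) qmatM !mulr0 !mul0r subr0 addr0. Qed.

Lemma vm_qmatD a b : vm v (qmat a 0) + vm v (qmat b 0) = vm v (qmat (a + b) 0).
Proof. by rewrite -(vmD Hrep (D_qmatC a) (D_qmatC b)) qmatD addr0. Qed.

Lemma vm_qmatN a : - vm v (qmat a 0) = vm v (qmat (- a) 0).
Proof. by rewrite -(vmN Hrep (D_qmatC a)) qmatN oppr0. Qed.

Lemma blkM a c a' c' : tc_mul (blk a c) (blk a' c') = blk (a * a' - c * c') (a * c' + c * a').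
Proof. by rewrite /tc_mul /blk /= !vm_qmatM vm_qmatN !vm_qmatD. Qed.

Lemma blk0 : blk 0 0 = (0, 0).
Proof. by rewrite /blk qmat0 (vm0 Hrep). Qed.

Lemma eps_Cvertex : eps_re v = 1 /\ eps_im v = 0.
Proof. by rewrite /eps_re /eps_im HvC. Qed.

Lemma blk_eTe a c : sandwich (blk a c) = blk a c.
Proof.
have [Ere Eim] := eps_Cvertex; have Dre := D_eps_re; have Dim := D_eps_im.
have Da := D_qmatC a; have Dc := D_qmatC c.
rewrite /sandwich ebfE /tc_mul /blk /= !(vdiag_vm_l Hrep) // Ere Eim.
rewrite !mul1r !mul0r (vm0 Hrep) subr0 addr0 !(vdiag_vm_r Hrep) // Ere Eim.
by rewrite !mulr1 !mulr0 (vm0 Hrep) subr0 add0r.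
Qed.

Lemma sigma_blk a c : sigma (blk a c) = blk a (- c).
Proof.
have [Ej Eji] : jq v = 1 /\ jq_inv v = 1 by rewrite /jq /jq_inv HvC.
have Da := D_qmatC a; have Dc := D_qmatC c.
rewrite /sigma /conj_by /blk /G /G_inv /= !(vdiag_vm_l Hrep D_jq) // Ej !mul1r.
by rewrite !(vdiag_vm_r Hrep D_jq_inv) // Eji !mulr1 vm_qmatN.
Qed.

Lemma vm_qmat_inj a a' : vm v 1 != 0 -> vm v (qmat a 0) = vm v (qmat a' 0) -> a = a'.
Proof.
move=> HP E; apply/eqP; rewrite -subr_eq0; apply/negP => /negP Hd.
have H0 : vm v (qmat (a - a') 0) = 0 by rewrite -vm_qmatD -vm_qmatN E subrr.
by move: HP; rewrite -qmat1 -(mulVf Hd) -vm_qmatM H0 mulr0 eqxx.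
Qed.

Lemma blk_inj a c a' c' : vm v 1 != 0 -> blk a c = blk a' c' -> a = a' /\ c = c'.
Proof. by move=> HP [/(vm_qmat_inj HP) -> /(vm_qmat_inj HP) ->]. Qed.

Lemma blk_vanish a c : vm v 1 = 0 -> blk a c = (0, 0).
Proof.
by move=> HP; rewrite /blk -(vm1l Hrep (D_qmatC a)) -(vm1l Hrep (D_qmatC c)) HP !mul0r.
Qed.
End CVertexBlock.
End Conjugation.

Section Transport.
Variables (R : realType) (M : mquiver) (T : algType R).
Variables (vm : Q0 M -> 'M[R[i]]_2 -> T) (am : Q1 M -> 'M[R[i]]_2 -> T).
Hypothesis Hrep : mod_rep vm am.
Variable Psi : tc T -> cg M R.
Hypothesis Hiso : is_cx_iso vm am Psi.
Local Notation sandwich := (sandwich vm).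
Local Notation in_eTe := (in_eTe vm).
Local Notation sigma := (sigma vm).
Local Notation delta := (cg_delta R).
Implicit Types (z w : tc T).

Lemma PsiZ c z : in_eTe z -> Psi (tc_scale c z) =1 (fun q => c * Psi z q).
Proof. by case: Hiso => _ H _ _ _ Hz; apply: H. Qed.

Lemma PsiM z w : in_eTe z -> in_eTe w -> Psi (tc_mul z w) =1 cg_mul (Psi z) (Psi w).
Proof. by case: Hiso => _ _ H _ _ Hz Hw; apply: H. Qed.

Lemma Psi_inj z w : in_eTe z -> in_eTe w -> Psi z =1 Psi w -> z = w.
Proof. by case: Hiso => _ _ _ _ [_ H _ _]; apply: H. Qed.

Lemma Psi_path p : qchain p.1 p.2 -> forall f : cg M R,
  (exists z, [/\ Mpath vm am p z.1, Mpath vm am p z.2 & Psi (sandwich z) =1 f])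
  <-> (forall q, f q != 0 -> is_fiber q p).
Proof. by case: Hiso => _ _ _ _ [_ _ _ H]; apply: H. Qed.

Lemma Psi0 : Psi (0, 0) =1 (fun=> 0).
Proof.
move=> q; have := PsiZ 0 (eTe0 vm) q; rewrite mul0r => <-.
by rewrite /tc_scale /= !scale0r subr0 addr0.
Qed.

Lemma delta_preimage g : gvalid g -> exists X, in_eTe X /\ Psi X =1 delta g.
Proof.
case: Hiso => _ _ _ _ [_ _ Hsurj _] Hg; apply: Hsurj => q Hq; rewrite /cg_delta.
by case: eqP => // E; move: Hq; rewrite E Hg.
Qed.

Lemma Psi_neq0 z g : Psi z =1 delta g -> z <> (0, 0).
Proof.
by move=> Pz E; have := Pz g; rewrite E Psi0 /cg_delta eqxx => /eqP; rewrite eq_sym oner_eq0.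
Qed.

Section FiberExchange.
Variables (be al : Q1 M).
Hypothesis Hv : tgt be = src al.
Hypothesis HC : dk (src al) = KC.
Hypotheses (Hbe : src be != src al) (Hal : tgt al != src al).
Local Notation v := (src al).
Local Notation fib := (fib be al).
Local Notation ab := (src be, [:: be; al]).

Lemma vertex_preimage_blk b E : in_eTe E -> Psi E =1 delta (vpath al b) ->
  exists a c, E = blk vm v a c.
Proof.
move=> HE PE.
have [] := (Psi_path (p := (v, [::])) isT (delta (vpath al b))).2.
  move=> q; rewrite /cg_delta; case: (q =P vpath al b) => [-> _|]; last by rewrite eqxx.
  by split => //; exact: vpath_valid.
move=> z [/= [y1 [Hy1 E1]] [y2 [Hy2 E2]] Pz].
move: Hy1 Hy2; rewrite HC => -[a Ea] [c Ec]; exists a, c.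
have Ez : sandwich z = blk vm v a c.
  by rewrite (surjective_pairing z) E1 E2 Ea Ec (blk_eTe Hrep HC).
apply: Psi_inj => // [|q]; first by exists (blk vm v a c); rewrite (blk_eTe Hrep HC).
by rewrite PE -Pz Ez.
Qed.

Lemma sigma_vertex_preimage b E E' : in_eTe E -> in_eTe E' ->
  Psi E =1 delta (vpath al b) -> Psi E' =1 delta (vpath al (~~ b)) -> sigma E = E'.
Proof.
move=> HE HE' PE PE'.
have [a [c Ea]] := vertex_preimage_blk HE PE.
have [a' [c' Ea']] := vertex_preimage_blk HE' PE'.
have E0 := Psi_neq0 PE; have E0' := Psi_neq0 PE'.
have HP : vm v 1 != 0 by apply/eqP => HP; apply: E0; rewrite Ea (blk_vanish Hrep HC).
have idem F g : in_eTe F -> Psi F =1 delta (vpath al g) -> tc_mul F F = F.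
  move=> HF PF; apply: Psi_inj => // [|q]; first exact: (eTe_mul Hrep).
  by rewrite PsiM // (cg_mul_ext PF PF) cg_mul_delta_vertex eqxx PF.
have orth : tc_mul E E' = (0, 0).
  apply: (Psi_inj (eTe_mul Hrep HE HE') (eTe0 vm)) => q.
  by rewrite PsiM // (cg_mul_ext PE PE') cg_mul_delta_vertex Psi0 /vpath xpair_eqE eqxx;
    case: (b).
move: (idem _ _ HE PE) (idem _ _ HE' PE') orth.
rewrite Ea Ea' !(blkM Hrep HC) -(blk0 Hrep v).
move=> /(blk_inj Hrep HC HP) [H1 H2] /(blk_inj Hrep HC HP) [H3 H4] /(blk_inj Hrep HC HP) [H5 H6].
have [-> ->] : a' = a /\ c' = - c.
  apply: orthogonal_idempotents_conj => // -[E1 E2].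
  - by apply: E0; rewrite Ea E1 E2 (blk0 Hrep).
  - by apply: E0'; rewrite Ea' E1 E2 (blk0 Hrep).
by rewrite (sigma_blk Hrep HC).
Qed.

Lemma fib_preimage_factor b E w : in_eTe E -> Psi E =1 delta (vpath al b) ->
  in_eTe w -> Psi w =1 delta (fib b) ->
  exists X Y, [/\ in_eTe X, in_eTe Y & w = tc_mul (tc_mul X E) Y].
Proof.
move=> HE PE Hw Pw.
have [X [HX PX]] := delta_preimage (al_path_valid HC b).
have [Y [HY PY]] := delta_preimage (be_path_valid Hv HC b).
exists X, Y; split => //.
have -> : tc_mul X E = X.
  apply: Psi_inj => // [|q]; first exact: (eTe_mul Hrep).
  by rewrite PsiM // (cg_mul_ext PX PE) (cg_mul_delta_unit_r R (al_path al b)) PX.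
apply: Psi_inj => // [|q]; first exact: (eTe_mul Hrep).
by rewrite Pw PsiM // (cg_mul_ext PX PY) (fib_split Hv HC).
Qed.

(* Hence sigma of it factors through the preimage of (v, ~~ b), which fib b *)
(* does not visit: its image under Psi vanishes at fib b.                  *)
Lemma sigma_fib_preimage_vanish b w : in_eTe w -> Psi w =1 delta (fib b) ->
  Psi (sigma w) (fib b) = 0.
Proof.
move=> Hw Pw.
have [E [HE PE]] := delta_preimage (vpath_valid HC b).
have [E' [HE' PE']] := delta_preimage (vpath_valid HC (~~ b)).
have [X [Y [HX HY ->]]] := fib_preimage_factor HE PE Hw Pw.
have sX := sigma_eTe Hrep HX; have sY := sigma_eTe Hrep HY.
rewrite !(sigmaM Hrep) (sigma_vertex_preimage HE HE' PE PE').
have PXE : Psi (tc_mul (sigma X) E') =1 cg_mul (Psi (sigma X)) (delta (vpath al (~~ b))).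
  by move=> q; rewrite PsiM // (cg_mul_ext (frefl _) PE').
rewrite PsiM //; last exact: (eTe_mul Hrep).
rewrite (cg_mul_ext PXE (frefl _)); apply: cg_mul_delta_mid0; exact: fib_avoids.
Qed.

(* sigma maps the preimage of fib b into M(al be) (x) C, whose image under *)
(* Psi is spanned by the fibers of al be.                                  *)
Lemma sigma_fib_preimage_support b w : in_eTe w -> Psi w =1 delta (fib b) ->
  forall q, Psi (sigma w) q != 0 -> is_fiber q ab.
Proof.
move=> Hw Pw.
have chain : qchain ab.1 ab.2 by rewrite /= Hv !eqxx.
have [z [Mz1 Mz2 Pz]] : exists z, [/\ Mpath vm am ab z.1, Mpath vm am ab z.2 &
    Psi (sandwich z) =1 delta (fib b)].
  apply/(Psi_path chain) => q; rewrite /cg_delta.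
  by case: (q =P fib b) => [-> _|]; [exact: fib_fiber | rewrite eqxx].
have -> : w = sandwich z by apply: Psi_inj => //; [exists z | move=> q; rewrite Pw Pz].
apply/(Psi_path chain); exists (sigma z); have [Ms1 Ms2] := Mpath_sigma Hrep Mz1 Mz2.
by split => // q; rewrite (sigma_sandwich Hrep).
Qed.

Lemma sigma_fib_preimage b w : in_eTe w -> Psi w =1 delta (fib b) ->
  exists c, c != 0 /\ Psi (sigma w) =1 (fun q => c * delta (fib (~~ b)) q).
Proof.
move=> Hw Pw; have sw := sigma_eTe Hrep Hw.
have off q : q != fib (~~ b) -> Psi (sigma w) q = 0.
  move=> Hq; apply/eqP/negPn/negP => Hnz.
  have [b' Eq] := fiberP Hv HC (sigma_fib_preimage_support Hw Pw Hnz).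
  move: Hnz Hq; rewrite Eq; case: (b' =P b) => [->|/eqP Hb'].
    by rewrite sigma_fib_preimage_vanish // eqxx.
  have -> : b' = ~~ b by move: Hb'; case: (b'); case: (b).
  by rewrite eqxx.
exists (Psi (sigma w) (fib (~~ b))); split.
  apply/eqP => Hc0; apply: (Psi_neq0 Pw); apply: (sigma_eq0 Hrep).
  apply: Psi_inj => // [|q]; first exact: eTe0.
  by rewrite Psi0; case: (q =P fib (~~ b)) => [->|/eqP]; [exact: Hc0 | exact: off].
move=> q; rewrite /cg_delta; case: (q =P fib (~~ b)) => [->|/eqP Hq]; first by rewrite mulr1.
by rewrite mulr0 off.
Qed.

Lemma inJ_fib_neg I b : is_ideal I ->
  inJ vm I Psi (delta (fib b)) -> inJ vm I Psi (delta (fib (~~ b))).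
Proof.
move=> HI [z [Iz1 Iz2 Pz]]; set w := sandwich z.
have Hw : in_eTe w by exists z.
have [c [Hc Pc]] := sigma_fib_preimage Hw Pz.
have Hs : in_eTe (tc_scale c^-1 (sigma w)) by apply/(eTe_scale Hrep)/(sigma_eTe Hrep).
have [I1 I2] : tc_ideal I (tc_scale c^-1 (sigma w)).
  by apply/(tc_ideal_scale HI)/(tc_ideal_conj_by HI)/(tc_ideal_mulr HI)/(tc_ideal_mull HI).
exists (tc_scale c^-1 (sigma w)); split => // q.
rewrite ((in_eTeE Hrep _).1 Hs) PsiZ ?Pc ?mulrA ?mulVf ?mul1r //.
exact: (sigma_eTe Hrep).
Qed.
End FiberExchange.
End Transport.

Theorem lemma6p4 (R : realType) (M : mquiver) (T : algType R)
    (vm : Q0 M -> 'M[R[i]]_2 -> T) (am : Q1 M -> 'M[R[i]]_2 -> T)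
    (I : T -> Prop) (Psi : tc T -> cg M R) (be al : Q1 M) :
  is_tree M ->
  is_tensor_alg vm am ->
  admissible am I ->
  is_cx_iso vm am Psi ->
  tgt be = src al ->          (* be : u -> v, al : v -> w *)
  dk (src al) = KC ->         (* M(v) = C *)
  let ab := (src be, [:: be; al]) in   (* the path al be of Q *)
  (exists p : gpath M, p <> taup p /\
     forall q, is_fiber q ab <-> q = p \/ q = taup p) /\
  (forall p, is_fiber p ab ->
     (inJ vm I Psi (cg_delta R p) <-> inJ vm I Psi (cg_delta R (taup p)))).
Proof.
move=> Htree [Hrep _] [HI _] Hiso Hv HC ab.
have Hbe : src be != src al by rewrite -Hv; exact: tree_noloop.
have Hal : tgt al != src al by rewrite eq_sym; exact: tree_noloop.
have exchange := inJ_fib_neg Hrep Hiso Hv HC Hbe Hal HI.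
split.
  exists (fib be al false); rewrite (taup_fib Hv HC); split; first exact: fib_neq.
  move=> q; split; first by move/(fiberP Hv HC) => [[] ->]; [right | left].
  by case=> ->; exact: fib_fiber.
move=> p /(fiberP Hv HC) [b ->]; rewrite (taup_fib Hv HC); split; first exact: exchange.
by move/exchange; rewrite negbK.
Qed.
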